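(* Every heaco $(\mathcal{C},P)$ is a $\Pi$-doctrine.
   Context: A doctrine is a pair $(\mathcal{C},P)$, $\mathcal{C}$ a category with finite products, $P:\mathcal{C}^{op}\to\mathbf{Pos}$ a functor, $f^*=P(f)$; primary: each $P(A)$ has binary meets preserved by each $f^*$. Elementary: primary and for every $A$ there is $\delta_A\in P(A\times A)$ such that for every $X$ the assignment $\psi\mapsto\langle\pi_1,\pi_2\rangle^*\psi\wedge\langle\pi_2,\pi_3\rangle^*\delta_A$ is a left adjoint $P(X\times A)\to P(X\times A\times A)$ to $(id_X\times\Delta_A)^*$. Graph of $f:X\to A$: $\mathcal{G}(f)=(f\times id_A)^*\delta_A$. Stable initial object: initial $0$ with $X\times0\cong0$ for all $X$. AC: for every $A$ not stable initial and every $\Gamma$, $\pi_\Gamma^*$ ($\pi_\Gamma:\Gamma\times A\to\Gamma$) has a left adjoint $\Sigma_{\pi_\Gamma}$ and each $\psi\in P(\Gamma\times A)$ has a chosen $\epsilon_\psi:\Gamma\to A$ with $\Sigma_{\pi_\Gamma}\psi=\langle id_\Gamma,\epsilon_\psi\rangle^*\psi$ (also with factors swapped). Co-comprehension: each $P(A)$ has a bottom and each $\alpha$ has $\lceil\alpha\rceil:\{\alpha\}^o\to A$ with $\lceil\alpha\rceil^*\alpha=\bot$, universal (unique factorization) among $f$ with $f^*\alpha=\bot$; full if $\lceil\beta\rceil$ factoring through $\lceil\alpha\rceil$ implies $\alpha\le\beta$. An eaco is an elementary doctrine with full co-comprehension satisfying AC such that for every $f:X\to A$, $\alpha\in P(A)$: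 $f^*\langle\epsilon_{\mathcal{G}(\lceil\alpha\rceil)},id_A\rangle^*\mathcal{G}(\lceil\alpha\rceil)=\langle\epsilon_{\mathcal{G}(\lceil f^*\alpha\rceil)},id_X\rangle^*\mathcal{G}(\lceil f^*\alpha\rceil)$. Higher order: for every $A$ there are $\mathbb{P}(A)$ and $\in_A\in P(A\times\mathbb{P}(A))$ such that every $\phi\in P(A\times Y)$ equals $(id_A\times\chi_\phi)^*\in_A$ for some $\chi_\phi:Y\to\mathbb{P}(A)$. A heaco is a higher order eaco. A $\Pi$-doctrine: for every product projection $f$, $f^*$ has a right adjoint $\Pi_f$ ($f^*\Pi_f\alpha\le\alpha$, $\beta\le\Pi_ff^*\beta$) with $h^*\Pi_f\gamma=\Pi_gk^*\gamma$ for every pullback square $h\circ g=f\circ k$. *)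

Set Implicit Arguments.
Unset Strict Implicit.
Set Universe Polymorphism.

Record Cat := {
  ob :> Type;
  hom : ob -> ob -> Type;
  idm : forall A, hom A A;
  comp : forall A B C, hom B C -> hom A B -> hom A C;  (* comp g f = g o f *)
  comp_assoc : forall A B C D (h : hom C D) (g : hom B C) (f : hom A B),
      comp h (comp g f) = comp (comp h g) f;
  comp_id_l : forall A B (f : hom A B), comp (idm B) f = f;
  comp_id_r : forall A B (f : hom A B), comp f (idm A) = f
}.

Arguments idm {c} A.
Arguments comp {c A B C} g f.

Record FPCat := {
  fpcat :> Cat;
  term : fpcat;
  bang : forall X : fpcat, hom X term;
  bang_uniq : forall X (f : hom X term), f = bang X;
  prod : fpcat -> fpcat -> fpcat;
  pi1 : forall X Y, hom (prod X Y) X;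
  pi2 : forall X Y, hom (prod X Y) Y;
  pair : forall W X Y, hom W X -> hom W Y -> hom W (prod X Y);
  pi1_pair : forall W X Y (f : hom W X) (g : hom W Y), comp (pi1 X Y) (pair f g) = f;
  pi2_pair : forall W X Y (f : hom W X) (g : hom W Y), comp (pi2 X Y) (pair f g) = g;
  pair_eta : forall W X Y (h : hom W (prod X Y)),
      pair (comp (pi1 X Y) h) (comp (pi2 X Y) h) = h
}.

Arguments bang {_} X.
Arguments prod {_} X Y.
Arguments pi1 {_ X Y}.
Arguments pi2 {_ X Y}.
Arguments pair {_ W X Y} _ _.

Section CatDefs.
Variable C : FPCat.

Definition prod_map (X Y A B : C) (f : hom X A) (g : hom Y B) : hom (prod X Y) (prod A B) :=
  pair (comp f pi1) (comp g pi2).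

Definition diag (A : C) : hom A (prod A A) := pair (idm A) (idm A).

Definition assoc_l (X A B : C) : hom (prod X (prod A B)) (prod (prod X A) B) :=
  pair (pair pi1 (comp pi1 pi2)) (comp pi2 pi2).

Definition is_iso (X Y : C) (f : hom X Y) : Prop :=
  exists g : hom Y X, comp g f = idm X /\ comp f g = idm Y.

Definition isomorphic (X Y : C) : Prop := exists f : hom X Y, is_iso f.

Definition is_initial (Z : C) : Prop :=
  forall X : C, exists f : hom Z X, forall g : hom Z X, g = f.

Definition stable_initial (Z : C) : Prop :=
  is_initial Z /\ forall X : C, isomorphic (prod X Z) Z.

Definition is_product (X Y Z : C) (p1 : hom Z X) (p2 : hom Z Y) : Prop :=
  forall (W : C) (a : hom W X) (b : hom W Y),
    exists u : hom W Z, (comp p1 u = a /\ comp p2 u = b) /\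
      forall v : hom W Z, comp p1 v = a /\ comp p2 v = b -> v = u.

Definition is_product_projection (Z X : C) (f : hom Z X) : Prop :=
  exists (Y : C) (p : hom Z Y), is_product f p.

Definition is_pullback (Q D Z G : C) (g : hom Q D) (k : hom Q Z) (h : hom D G) (f : hom Z G)
  : Prop :=
  comp h g = comp f k /\
  forall (W : C) (a : hom W D) (b : hom W Z), comp h a = comp f b ->
    exists u : hom W Q, (comp g u = a /\ comp k u = b) /\
      forall v : hom W Q, comp g v = a /\ comp k v = b -> v = u.

End CatDefs.

Record Doctrine (C : FPCat) := {
  P : C -> Type;
  le : forall A, P A -> P A -> Prop;
  le_refl : forall A (a : P A), le a a;
  le_trans : forall A (a b c : P A), le a b -> le b c -> le a c;
  le_antisym : forall A (a b : P A), le a b -> le b a -> a = b;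
  pb : forall X A : C, hom X A -> P A -> P X;
  pb_mono : forall X A (f : hom X A) (a b : P A), le a b -> le (pb f a) (pb f b);
  pb_id : forall A (a : P A), pb (idm A) a = a;
  pb_comp : forall X Y A (f : hom X Y) (g : hom Y A) (a : P A),
      pb (comp g f) a = pb f (pb g a)
}.

Arguments P {C} d A.
Arguments le {C d A} _ _.
Arguments pb {C d X A} f _.

Section DocDefs.
Variable C : FPCat.
Variable D : Doctrine C.

Definition graph (delta : forall A : C, P D (prod A A)) (X A : C) (f : hom X A)
  : P D (prod X A) :=
  pb (prod_map f (idm A)) (delta A).

End DocDefs.

(** * Heacos: higher order elementary doctrines with full co-comprehension
      satisfying AC and the eaco stability condition.  All chosen data is
      recorded explicitly. *)

Record Heaco (C : FPCat) (D : Doctrine C) := {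
  meet : forall A : C, P D A -> P D A -> P D A;
  meet_lb1 : forall A (a b : P D A), le (meet a b) a;
  meet_lb2 : forall A (a b : P D A), le (meet a b) b;
  meet_glb : forall A (a b c : P D A), le c a -> le c b -> le c (meet a b);
  pb_meet : forall X A (f : hom X A) (a b : P D A),
      pb f (meet a b) = meet (pb f a) (pb f b);

  delta : forall A : C, P D (prod A A);
  delta_adj : forall (X A : C) (psi : P D (prod X A)) (phi : P D (prod (prod X A) A)),
      le (meet (pb (pair (comp pi1 pi1) (comp pi2 pi1)) psi)
               (pb (pair (comp pi2 pi1) pi2) (delta A))) phi
      <-> le psi (pb (comp (assoc_l X A A) (prod_map (idm X) (diag A))) phi);

  bot : forall A : C, P D A;
  bot_least : forall A (a : P D A), le (bot A) a;
  cocomp_ob : forall A : C, P D A -> C;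
  cocomp : forall A (alpha : P D A), hom (cocomp_ob alpha) A;
  cocomp_bot : forall A (alpha : P D A), pb (cocomp alpha) alpha = bot (cocomp_ob alpha);
  cocomp_univ : forall A (alpha : P D A) (X : C) (f : hom X A), pb f alpha = bot X ->
      exists h : hom X (cocomp_ob alpha), comp (cocomp alpha) h = f /\
        forall h' : hom X (cocomp_ob alpha), comp (cocomp alpha) h' = f -> h' = h;
  cocomp_full : forall A (alpha beta : P D A),
      (exists h : hom (cocomp_ob beta) (cocomp_ob alpha), comp (cocomp alpha) h = cocomp beta)
      -> le alpha beta;

  Sigma1 : forall (G A : C), ~ stable_initial A -> P D (prod G A) -> P D G;
  Sigma1_adj : forall G A (nA : ~ stable_initial A) (psi : P D (prod G A)) (phi : P D G),
      le (Sigma1 nA psi) phi <-> le psi (pb pi1 phi);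
  eps1 : forall (G A : C), ~ stable_initial A -> P D (prod G A) -> hom G A;
  eps1_spec : forall G A (nA : ~ stable_initial A) (psi : P D (prod G A)),
      Sigma1 nA psi = pb (pair (idm G) (eps1 nA psi)) psi;
  Sigma2 : forall (G A : C), ~ stable_initial A -> P D (prod A G) -> P D G;
  Sigma2_adj : forall G A (nA : ~ stable_initial A) (psi : P D (prod A G)) (phi : P D G),
      le (Sigma2 nA psi) phi <-> le psi (pb pi2 phi);
  eps2 : forall (G A : C), ~ stable_initial A -> P D (prod A G) -> hom G A;
  eps2_spec : forall G A (nA : ~ stable_initial A) (psi : P D (prod A G)),
      Sigma2 nA psi = pb (pair (eps2 nA psi) (idm G)) psi;

  eaco_cond : forall (X A : C) (f : hom X A) (alpha : P D A)
      (n1 : ~ stable_initial (cocomp_ob alpha))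
      (n2 : ~ stable_initial (cocomp_ob (pb f alpha))),
      pb f (pb (pair (eps2 n1 (graph delta (cocomp alpha))) (idm A))
               (graph delta (cocomp alpha)))
      = pb (pair (eps2 n2 (graph delta (cocomp (pb f alpha)))) (idm X))
           (graph delta (cocomp (pb f alpha)));

  higher_order : forall A : C, exists (PA : C) (inA : P D (prod A PA)),
      forall (Y : C) (phi : P D (prod A Y)),
        exists chi : hom Y PA, phi = pb (prod_map (idm A) chi) inA
}.

Definition is_Pi_doctrine (C : FPCat) (D : Doctrine C) : Prop :=
  exists Pi : forall (Z X : C) (f : hom Z X), is_product_projection f -> P D Z -> P D X,
    (forall Z X (f : hom Z X) (Hf : is_product_projection f) (beta : P D X) (alpha : P D Z),
        le (pb f beta) alpha <-> le beta (Pi Z X f Hf alpha)) /\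
    (forall (Q Dl Z G : C) (g : hom Q Dl) (k : hom Q Z) (h : hom Dl G) (f : hom Z G)
        (Hf : is_product_projection f) (Hg : is_product_projection g),
        is_pullback g k h f ->
        forall gamma : P D Z, pb h (Pi Z G f Hf gamma) = Pi Q Dl g Hg (pb k gamma)).

From Stdlib Require Import Classical ClassicalEpsilon.

Set Implicit Arguments.
Unset Strict Implicit.

(* For Y not stable initial, the right adjoint to reindexing along X x Y -> X
   is reindexing along a section <id, eps>, where eps is the AC witness of the
   existential image of the co-comprehension of psi, i.e. of the
   "counterexamples" to psi: if <id, eps>^* psi holds at x, then no
   counterexample lies over x.  The argument needs reindexing to preserve
   bottom, which is what the eaco condition provides.  When Y is stable
   initial, so is X x Y, and the adjoint is top.  Since the adjoint is
   reindexing along a section, Beck-Chevalley follows from the universal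
   property of the pullback. *)

Section Products.
Variable C : FPCat.

Lemma pair_comp (W V X Y : C) (f : hom W X) (g : hom W Y) (h : hom V W) :
  comp (pair f g) h = pair (comp f h) (comp g h).
Proof.
  rewrite <- (pair_eta (comp (pair f g) h)).
  rewrite !comp_assoc, pi1_pair, pi2_pair. reflexivity.
Qed.

Lemma pi1_pair_comp (W V X Y : C) (f : hom W X) (g : hom W Y) (h : hom V W) :
  comp pi1 (comp (pair f g) h) = comp f h.
Proof. rewrite comp_assoc, pi1_pair. reflexivity. Qed.

Lemma pi2_pair_comp (W V X Y : C) (f : hom W X) (g : hom W Y) (h : hom V W) :
  comp pi2 (comp (pair f g) h) = comp g h.
Proof. rewrite comp_assoc, pi2_pair. reflexivity. Qed.

Lemma pair_pi1_pi2 (X Y : C) : pair (@pi1 C X Y) pi2 = idm _.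
Proof.
  rewrite <- (pair_eta (idm (prod X Y))). rewrite !comp_id_r. reflexivity.
Qed.

Lemma is_product_iso (Z X Y : C) (f : hom Z X) (p : hom Z Y) :
  is_product f p ->
  exists e : hom (prod X Y) Z, comp f e = pi1 /\ comp e (pair f p) = idm Z.
Proof.
  intros hp.
  destruct (hp (prod X Y) pi1 pi2) as [e [[hfe hpe] _]].
  destruct (hp Z f p) as [u [_ hu]].
  exists e. split; [exact hfe |].
  rewrite (hu (comp e (pair f p))), (hu (idm Z)); [reflexivity | |].
  - rewrite !comp_id_r. split; reflexivity.
  - rewrite !comp_assoc, hfe, hpe, pi1_pair, pi2_pair. split; reflexivity.
Qed.

End Products.

Ltac prod_simpl := repeat (rewrite ?pair_comp, ?pi1_pair, ?pi2_pair, ?pi1_pair_comp,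
  ?pi2_pair_comp, ?comp_id_l, ?comp_id_r, <- ?comp_assoc).

Tactic Notation "prod_simpl" "in" hyp(E) := repeat (rewrite ?pair_comp, ?pi1_pair,
  ?pi2_pair, ?pi1_pair_comp, ?pi2_pair_comp, ?comp_id_l, ?comp_id_r, <- ?comp_assoc in E).

Section InitialObjects.
Variable C : FPCat.

Lemma initial_map_unique (Z W : C) (f g : hom Z W) : is_initial Z -> f = g.
Proof. intros hZ. destruct (hZ W) as [u hu]. rewrite (hu f), (hu g). reflexivity. Qed.

Lemma initial_of_iso (Z' Z : C) (f : hom Z' Z) : is_iso f -> is_initial Z -> is_initial Z'.
Proof.
  intros [g [hgf hfg]] hZ W. destruct (hZ W) as [u hu]. exists (comp u f).
  intros k. rewrite <- (comp_id_r k), <- hgf, comp_assoc, (hu (comp k g)). reflexivity.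
Qed.

Lemma initial_of_map_stable_initial (X U : C) (f : hom X U) :
  stable_initial U -> is_initial X.
Proof.
  intros [hU hXU]. destruct (hXU X) as [i hi].
  assert (hP : is_initial (prod X U)) by (eapply initial_of_iso; eauto).
  intros W. destruct (hU W) as [u _]. exists (comp u f). intros g.
  assert (E : comp g (@pi1 C X U) = comp (comp u f) pi1)
    by (apply initial_map_unique; exact hP).
  rewrite <- (comp_id_r g), <- (comp_id_r (comp u f)).
  rewrite <- (pi1_pair (idm X) f), !comp_assoc, E. reflexivity.
Qed.

Lemma initial_isomorphic (Z1 Z2 : C) : is_initial Z1 -> is_initial Z2 -> isomorphic Z1 Z2.
Proof.
  intros h1 h2. destruct (h1 Z2) as [a _]. destruct (h2 Z1) as [b _].
  exists a, b. split; apply initial_map_unique; assumption.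
Qed.

Lemma stable_initial_of_map (X U : C) (f : hom X U) : stable_initial U -> stable_initial X.
Proof.
  intros hU. split.
  - exact (initial_of_map_stable_initial f hU).
  - intros Z. apply initial_isomorphic.
    + exact (initial_of_map_stable_initial (comp f pi2) hU).
    + exact (initial_of_map_stable_initial f hU).
Qed.

End InitialObjects.

Section Heaco.
Variable C : FPCat.
Variable D : Doctrine C.
Variable H : Heaco D.

Definition top (A : C) : P D A := pb (diag A) (delta H A).

Definition is_top (A : C) (x : P D A) : Prop := forall y, le y x.

Lemma le_pb_pi2_top (W A : C) (psi : P D (prod W A)) : le psi (pb pi2 (top A)).
Proof.
  pose proof (proj1 (delta_adj H psi (pb (pair (comp pi2 pi1) pi2) (delta H A)))
                    (meet_lb2 _ _ _)) as E.
  rewrite <- pb_comp in E. unfold top. rewrite <- pb_comp.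
  unfold diag, prod_map, assoc_l in E. prod_simpl in E.
  unfold diag. prod_simpl. exact E.
Qed.

Lemma le_pb_top (W A : C) (u : hom W A) (x : P D W) : le x (pb u (top A)).
Proof.
  replace x with (pb (pair (idm W) u) (pb pi1 x))
    by (rewrite <- pb_comp, pi1_pair, pb_id; reflexivity).
  replace (pb u (top A)) with (pb (pair (idm W) u) (pb pi2 (top A)))
    by (rewrite <- pb_comp, pi2_pair; reflexivity).
  apply pb_mono, le_pb_pi2_top.
Qed.

Lemma is_top_top (A : C) : is_top (top A).
Proof. intro y. rewrite <- (pb_id (top A)). apply le_pb_top. Qed.

Lemma is_top_pb (X A : C) (f : hom X A) (x : P D A) : is_top x -> is_top (pb f x).
Proof. intros hx y. eapply le_trans; [apply (le_pb_top f) | apply pb_mono, hx]. Qed.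

Lemma is_top_delta_diag (V A : C) (u : hom V A) : is_top (pb (pair u u) (delta H A)).
Proof.
  replace (pair u u) with (comp (diag A) u) by (unfold diag; prod_simpl; reflexivity).
  rewrite pb_comp. apply is_top_pb, is_top_top.
Qed.

Lemma delta_subst (V W A : C) (beta : P D (prod W A)) (w : hom V W) (u v : hom V A) :
  le (meet H (pb (pair w u) beta) (pb (pair u v) (delta H A))) (pb (pair w v) beta).
Proof.
  assert (hunit : le beta (pb (comp (assoc_l W A A) (prod_map (idm W) (diag A)))
                              (pb (pair (comp pi1 pi1) pi2) beta))).
  { rewrite <- pb_comp. unfold assoc_l, prod_map, diag. prod_simpl.
    rewrite pair_pi1_pi2, pb_id. apply le_refl. }
  pose proof (pb_mono (pair (pair w u) v) (proj2 (delta_adj H _ _) hunit)) as E.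
  rewrite pb_meet, <- !pb_comp in E. prod_simpl in E. exact E.
Qed.

Lemma pb_le_of_delta_top (V A : C) (u v : hom V A) (beta : P D A) :
  is_top (pb (pair u v) (delta H A)) -> le (pb u beta) (pb v beta).
Proof.
  intros huv.
  pose proof (delta_subst (pb pi2 beta) u u v) as E.
  rewrite <- !pb_comp, !pi2_pair in E.
  eapply le_trans; [| exact E]. apply meet_glb; [apply le_refl | apply huv].
Qed.

Lemma is_top_delta_sym (V A : C) (u v : hom V A) :
  is_top (pb (pair u v) (delta H A)) -> is_top (pb (pair v u) (delta H A)).
Proof.
  intros huv y.
  pose proof (delta_subst (pb (pair pi2 pi1) (delta H A)) u u v) as E.
  rewrite <- !pb_comp in E. prod_simpl in E.
  eapply le_trans; [| exact E].
  apply meet_glb; [apply is_top_delta_diag | apply huv].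
Qed.

Lemma pb_eq_of_delta_top (V A : C) (u v : hom V A) (beta : P D A) :
  is_top (pb (pair u v) (delta H A)) -> pb u beta = pb v beta.
Proof.
  intros huv. apply le_antisym; apply pb_le_of_delta_top; [exact huv |].
  apply is_top_delta_sym, huv.
Qed.

Definition image (O A : C) (nO : ~ stable_initial O) (g : hom O A) : P D A :=
  Sigma2 H nO (graph (delta H) g).

Definition image_witness (O A : C) (nO : ~ stable_initial O) (g : hom O A) : hom A O :=
  eps2 H nO (graph (delta H) g).

Lemma image_eq_delta (O A : C) (nO : ~ stable_initial O) (g : hom O A) :
  image nO g = pb (pair (comp g (image_witness nO g)) (idm A)) (delta H A).
Proof.
  unfold image, image_witness. rewrite eps2_spec. unfold graph. rewrite <- pb_comp.
  unfold prod_map. prod_simpl. reflexivity.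
Qed.

Lemma graph_le_pb_image (O A : C) (nO : ~ stable_initial O) (g : hom O A) :
  le (graph (delta H) g) (pb pi2 (image nO g)).
Proof. apply (Sigma2_adj H nO), le_refl. Qed.

Lemma is_top_pb_image (O A : C) (nO : ~ stable_initial O) (g : hom O A) :
  is_top (pb g (image nO g)).
Proof.
  intro y. eapply le_trans; [apply (is_top_delta_diag g y) |].
  pose proof (pb_mono (pair (idm O) g) (graph_le_pb_image nO g)) as E.
  unfold graph, prod_map in E. rewrite <- !pb_comp in E. prod_simpl in E. exact E.
Qed.

Lemma is_top_image_of_section (O A : C) (nO : ~ stable_initial O) (g : hom O A)
  (s : hom A O) : comp g s = idm A -> is_top (image nO g).
Proof.
  intros hgs y. eapply le_trans; [apply (is_top_delta_diag (idm A) y) |].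
  pose proof (pb_mono (pair s (idm A)) (graph_le_pb_image nO g)) as E.
  unfold graph, prod_map in E. rewrite <- !pb_comp in E. prod_simpl in E.
  rewrite hgs, pb_id in E. exact E.
Qed.

Lemma pb_image_witness (O A V : C) (nO : ~ stable_initial O) (g : hom O A) (d : hom V A)
  (beta : P D A) :
  is_top (pb d (image nO g)) -> pb (comp g (comp (image_witness nO g) d)) beta = pb d beta.
Proof.
  intros hd. rewrite image_eq_delta, <- pb_comp in hd. prod_simpl in hd.
  apply pb_eq_of_delta_top, hd.
Qed.

Lemma le_of_pb_cocomp_bot (A : C) (alpha beta : P D A) :
  pb (cocomp H beta) alpha = bot H _ -> le alpha beta.
Proof.
  intros E. destruct (cocomp_univ E) as [h [Eh _]].
  apply (cocomp_full (h:=H)). exists h. exact Eh.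
Qed.

Lemma pb_cocomp_bot (A : C) (alpha : P D A) : pb (cocomp H alpha) (bot H A) = bot H _.
Proof.
  apply le_antisym; [| apply bot_least].
  rewrite <- (cocomp_bot H alpha). apply pb_mono, bot_least.
Qed.

Lemma eq_bot_stable_initial (X : C) (alpha : P D X) : stable_initial X -> alpha = bot H X.
Proof.
  intros hX. apply le_antisym; [| apply bot_least].
  apply (cocomp_full (h:=H)).
  assert (hB : is_initial (cocomp_ob H (bot H X)))
    by exact (initial_of_map_stable_initial (cocomp H (bot H X)) hX).
  destruct (hB (cocomp_ob H alpha)) as [h _]. exists h.
  apply initial_map_unique, hB.
Qed.

Lemma pb_bot_of_retraction (X Y : C) (f : hom X Y) (r : hom Y X) :
  comp r f = idm X -> pb f (bot H Y) = bot H X.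
Proof.
  intros hrf. apply le_antisym; [| apply bot_least].
  rewrite <- (pb_id (bot H X)), <- hrf, pb_comp. apply pb_mono, bot_least.
Qed.

Lemma not_stable_initial_cocomp_ob (W X : C) (w : hom W X) (alpha : P D X) :
  pb w alpha = bot H W -> ~ stable_initial W -> ~ stable_initial (cocomp_ob H alpha).
Proof.
  intros hw nW hO. destruct (cocomp_univ hw) as [h _].
  exact (nW (stable_initial_of_map h hO)).
Qed.

Definition point (X : C) (nX : ~ stable_initial X) : hom (term C) X :=
  eps1 H nX (bot H (prod (term C) X)).

Lemma pb_bot (X Y : C) (f : hom X Y) : pb f (bot H Y) = bot H X.
Proof.
  destruct (classic (stable_initial X)) as [hX | nX]; [apply eq_bot_stable_initial, hX |].
  assert (nY : ~ stable_initial Y) by (intros hY; exact (nX (stable_initial_of_map f hY))).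
  assert (nT : ~ stable_initial (term C))
    by (intros hT; exact (nX (stable_initial_of_map (bang X) hT))).
  set (gam := pb f (bot H Y)).
  assert (n1 : ~ stable_initial (cocomp_ob H (bot H Y)))
    by exact (not_stable_initial_cocomp_ob (pb_id (bot H Y)) nY).
  assert (n2 : ~ stable_initial (cocomp_ob H gam)).
  { apply (not_stable_initial_cocomp_ob (w := point nX)); [| exact nT].
    unfold gam. rewrite <- pb_comp. apply (pb_bot_of_retraction (r := bang Y)).
    rewrite (bang_uniq (comp (bang Y) _)). symmetry. apply bang_uniq. }
  assert (top1 : is_top (image n1 (cocomp H (bot H Y)))).
  { destruct (cocomp_univ (pb_id (bot H Y))) as [s [hs _]].
    exact (is_top_image_of_section n1 hs). }
  assert (top2 : is_top (image n2 (cocomp H gam))).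
  { pose proof (eaco_cond (f := f) n1 n2) as E. rewrite <- !eps2_spec in E.
    unfold image. fold gam in E. rewrite <- E. apply is_top_pb, top1. }
  (* With u := cocomp gam, e := its image witness: gam = e^* u^* gam = e^* bot
     = e^* u^* bot = bot. *)
  rewrite <- pb_id in top2.
  pose proof (pb_image_witness gam top2) as Egam.
  pose proof (pb_image_witness (bot H X) top2) as Ebot.
  rewrite comp_id_r, !pb_id, !pb_comp in Egam, Ebot.
  rewrite <- Egam, <- Ebot, cocomp_bot, pb_cocomp_bot. reflexivity.
Qed.

(* [eps] maps each [x] to a counterexample to [psi] over [x], whenever one exists. *)
Lemma forall_witness (X Y : C) (nY : ~ stable_initial Y) (psi : P D (prod X Y)) :
  exists eps : hom X Y, le (pb pi1 (pb (pair (idm X) eps) psi)) psi.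
Proof.
  set (c := cocomp H psi).
  destruct (classic (stable_initial (cocomp_ob H psi))) as [hO | nO].
  { exists (eps1 H nY psi). apply le_of_pb_cocomp_bot, eq_bot_stable_initial, hO. }
  set (N := image nO c). set (eps := eps1 H nY N). exists eps.
  apply le_of_pb_cocomp_bot. fold c.
  set (d := comp (pair (idm X) eps) (comp pi1 c)).
  assert (hd : is_top (pb d N)).
  { assert (hN : le N (pb pi1 (pb (pair (idm X) eps) N))).
    { unfold eps. rewrite <- eps1_spec. apply (Sigma1_adj H nY), le_refl. }
    intro y. eapply le_trans; [apply (is_top_pb_image nO c) |].
    apply (pb_mono c) in hN. unfold d. rewrite !pb_comp. exact hN. }
  replace (pb c (pb pi1 (pb (pair (idm X) eps) psi))) with (pb d psi)
    by (unfold d; rewrite !pb_comp; reflexivity).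
  rewrite <- (pb_image_witness psi hd), pb_comp. fold c.
  unfold c. rewrite (cocomp_bot H psi). apply pb_bot.
Qed.

Lemma projection_witness (Z X Y : C) (f : hom Z X) (p : hom Z Y)
  (nY : ~ stable_initial Y) (gam : P D Z) :
  is_product f p -> exists s : hom X Z, comp f s = idm X /\ le (pb f (pb s gam)) gam.
Proof.
  intros hp. destruct (is_product_iso hp) as [e [hfe he]].
  destruct (forall_witness nY (pb e gam)) as [eps heps].
  exists (comp e (pair (idm X) eps)). split.
  - rewrite comp_assoc, hfe, pi1_pair. reflexivity.
  - apply (pb_mono (pair f p)) in heps.
    rewrite <- !pb_comp, he, pb_id in heps.
    rewrite pi1_pair in heps. rewrite <- pb_comp, <- comp_assoc. exact heps.
Qed.

Lemma projection_section_or_trivial (Z X : C) (f : hom Z X)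
  (Hf : is_product_projection f) (gam : P D Z) :
  (forall beta : P D X, le (pb f beta) gam) \/
  exists s : hom X Z, comp f s = idm X /\ le (pb f (pb s gam)) gam.
Proof.
  destruct Hf as [Y [p hp]].
  destruct (classic (stable_initial Y)) as [hY | nY].
  - left. intros beta.
    rewrite (eq_bot_stable_initial (pb f beta) (stable_initial_of_map p hY)).
    apply bot_least.
  - right. exact (projection_witness nY gam hp).
Qed.

Lemma ex_Pi (Z X : C) (f : hom Z X) (Hf : is_product_projection f) (gam : P D Z) :
  exists b : P D X, forall beta, le (pb f beta) gam <-> le beta b.
Proof.
  destruct (projection_section_or_trivial Hf gam) as [htriv | [s [hfs hs]]].
  - exists (top X). intros beta. split; intros _; [apply is_top_top | apply htriv].
  - exists (pb s gam). intros beta. split; intros hb.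
    + apply (pb_mono s) in hb. rewrite <- pb_comp, hfs, pb_id in hb. exact hb.
    + eapply le_trans; [apply pb_mono, hb | exact hs].
Qed.

Definition Pi (Z X : C) (f : hom Z X) (Hf : is_product_projection f) (gam : P D Z)
  : P D X :=
  proj1_sig (constructive_indefinite_description _ (ex_Pi Hf gam)).

Lemma Pi_adj (Z X : C) (f : hom Z X) (Hf : is_product_projection f) (gam : P D Z)
  (beta : P D X) : le (pb f beta) gam <-> le beta (Pi Hf gam).
Proof.
  unfold Pi. destruct (constructive_indefinite_description _ _) as [b hb]. apply hb.
Qed.

Lemma Pi_counit (Z X : C) (f : hom Z X) (Hf : is_product_projection f) (gam : P D Z) :
  le (pb f (Pi Hf gam)) gam.
Proof. apply (proj2 (Pi_adj Hf gam _)), le_refl. Qed.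

Lemma Pi_beck_chevalley (Q Dl Z G : C) (g : hom Q Dl) (k : hom Q Z) (h : hom Dl G)
  (f : hom Z G) (Hf : is_product_projection f) (Hg : is_product_projection g) :
  is_pullback g k h f -> forall gam : P D Z, pb h (Pi Hf gam) = Pi Hg (pb k gam).
Proof.
  intros [Esq Hpb] gam. apply le_antisym.
  - apply Pi_adj. rewrite <- pb_comp, Esq, pb_comp. apply pb_mono, Pi_counit.
  - destruct (projection_section_or_trivial Hf gam) as [htriv | [s [hfs hs]]].
    + apply (is_top_pb h). intro y.
      eapply le_trans; [apply is_top_top | apply Pi_adj, htriv].
    + destruct (Hpb Dl (idm Dl) (comp s h)) as [w [[hgw hkw] _]].
      { rewrite comp_id_r, comp_assoc, hfs, comp_id_l. reflexivity. }
      eapply le_trans; [| apply pb_mono, Pi_adj, hs].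
      rewrite <- pb_comp, <- hkw, <- (pb_id (Pi Hg _)), <- hgw, !pb_comp.
      apply pb_mono, Pi_counit.
Qed.

End Heaco.

Theorem mainTheorem14 : forall (C : FPCat) (D : Doctrine C), Heaco D -> is_Pi_doctrine D.
Proof.
  intros C D H. exists (Pi H). split.
  - intros. apply Pi_adj.
  - intros. apply Pi_beck_chevalley. assumption.
Qed.
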